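(* Let $\mathbb{K}$ be an algebraically closed field of characteristic zero, let $Y$ be an affine factorial variety over $\mathbb{K}$, and let $f\in\mathbb{K}[Y]$ be non-constant with $f=p_1^{a_1}\cdots p_s^{a_s}$, where $p_1,\dots,p_s$ are pairwise non-associated prime elements of $\mathbb{K}[Y]$ and $a_i\in\mathbb{Z}_{>0}$. Let $X=\{uv=f\}\subseteq\mathbb{A}^2_{u,v}\times Y$. Then the divisor class group satisfies $\operatorname{Cl}(X)\cong\mathbb{Z}^s/\langle\omega\rangle$, where $\omega=(a_1,\dots,a_s)$. *)

From HB Require Import structures.
From mathcomp Require Import all_boot all_order all_algebra.
From Stdlib Require List.
Set Implicit Arguments. Unset Strict Implicit. Unset Printing Implicit Defensive.
Import Order.TTheory GRing.Theory Num.Theory.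
Local Open Scope ring_scope.

Definition rdvd {R : comNzRingType} (p x : R) : Prop := exists c, x = c * p.

Definition prime_elt {R : comUnitRingType} (p : R) : Prop :=
  p != 0 /\ p \isn't a GRing.unit /\
  forall x y, rdvd p (x * y) -> rdvd p x \/ rdvd p y.

Definition associated {R : comNzRingType} (p q : R) : Prop := rdvd p q /\ rdvd q p.

Definition factorial_ring (R : idomainType) : Prop :=
  forall b : R, b != 0 -> b \isn't a GRing.unit ->
    exists l : seq R, (forall q, q \in l -> prime_elt q) /\ b = \prod_(q <- l) q.

Definition in_gen_subalg {K : fieldType} {B : comNzRingType} (phi : K -> B)
  {n : nat} (gens : 'I_n -> B) (b : B) : Prop :=
  forall S : B -> Prop,
    (forall c, S (phi c)) -> (forall i, S (gens i)) ->
    (forall x y, S x -> S y -> S (x + y)) ->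
    (forall x y, S x -> S y -> S (x * y)) -> S b.

Definition fin_gen_alg {K : fieldType} {B : comNzRingType} (phi : K -> B) : Prop :=
  exists n (gens : 'I_n -> B), forall b, in_gen_subalg phi gens b.

(* evaluation of P in B[u][v] (inner variable u, outer variable v) *)
Definition ev2 {B A : comNzRingType} (iota : B -> A) (u v : A)
  (P : {poly {poly B}}) : A :=
  \sum_(i < size P) (\sum_(j < size P`_i) iota (P`_i)`_j * u ^+ j) * v ^+ i.

Definition is_ideal {A : comNzRingType} (I : A -> Prop) : Prop :=
  I 0 /\ (forall x y, I x -> I y -> I (x + y)) /\ (forall r x, I x -> I (r * x)).

Definition prime_ideal {A : comNzRingType} (P : A -> Prop) : Prop :=
  is_ideal P /\ ~ P 1 /\ forall x y, P (x * y) -> P x \/ P y.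

Definition height_one {A : comNzRingType} (P : A -> Prop) : Prop :=
  prime_ideal P /\ (exists x, x != 0 /\ P x) /\
  forall Q : A -> Prop, prime_ideal Q -> (forall x, Q x -> P x) ->
    (forall x, Q x -> x = 0) \/ (forall x, Q x <-> P x).

Definition HOP (A : comNzRingType) := {P : A -> Prop | height_one P}.

Fixpoint ideal_pow {A : comNzRingType} (P : A -> Prop) (n : nat) (a : A) : Prop :=
  match n with
  | 0%N => True
  | n'.+1 => exists l : seq (A * A),
      (forall xy, xy \in l -> ideal_pow P n' xy.1 /\ P xy.2) /\
      a = \sum_(xy <- l) xy.1 * xy.2
  end.

(* symbolic power P^(n) = P^n A_P ∩ A *)
Definition sym_pow {A : comNzRingType} (P : A -> Prop) (n : nat) (a : A) : Prop :=
  exists s, ~ P s /\ ideal_pow P n (s * a).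

Definition ord_at {A : comNzRingType} (P : A -> Prop) (a : A) (n : nat) : Prop :=
  sym_pow P n a /\ ~ sym_pow P n.+1 a.

Definition weil_div {A : comNzRingType} (D : HOP A -> int) : Prop :=
  exists l : list (A -> Prop), forall P, D P <> 0 -> List.In (proj1_sig P) l.

Definition is_div_of {A : comNzRingType} (a : A) (D : HOP A -> int) : Prop :=
  forall P : HOP A, exists n : nat, ord_at (proj1_sig P) a n /\ D P = n%:Z.

(* principal divisors: div(a/b) = div a - div b for nonzero a, b *)
Definition principal_div {A : comNzRingType} (D : HOP A -> int) : Prop :=
  exists (a b : A) (Da Db : HOP A -> int),
    a != 0 /\ b != 0 /\ is_div_of a Da /\ is_div_of b Db /\
    forall P, D P = Da P - Db P.

Definition in_span {s : nat} (w : 'I_s -> int) (z : 'I_s -> int) : Prop :=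
  exists k : int, forall i, z i = k * w i.

Definition Cl_iso_Zs_mod (A : comNzRingType) (s : nat) (w : 'I_s -> int) : Prop :=
  exists Phi : (HOP A -> int) -> ('I_s -> int),
    (forall D1 D2, weil_div D1 -> weil_div D2 ->
       forall i, Phi (fun P => D1 P + D2 P) i = Phi D1 i + Phi D2 i) /\
    (forall z, exists D, weil_div D /\ in_span w (fun i => Phi D i - z i)) /\
    (forall D, weil_div D -> (in_span w (Phi D) <-> principal_div D)).

(* Inverting u turns A = B[u,v]/(uv - f) into B[u, 1/u], and B[u] is factorial
   by Gauss's lemma.  Hence the height-one primes of A not containing u come
   from the primes of B[u] not associated with u, and every Weil divisor D
   agrees away from V(u) with the divisor of a fraction g/h of elements of B[u].
   The height-one primes containing u are the components D_i of {u = p_i = 0},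
   seen in the chart where v is inverted, and div(u) = a_1 D_1 + ... + a_s D_s.
   The coefficients of D - div(g/h) along D_1, ..., D_s give an additive
   surjection onto Z^s, and D is principal exactly when this vector is a
   multiple of (a_1, ..., a_s). *)

From HB Require Import structures.
From mathcomp Require Import all_boot all_order all_algebra.
From mathcomp Require Import ring zify.
From Stdlib Require Import Classical ClassicalEpsilon FunctionalExtensionality PropExtensionality.
Set Implicit Arguments. Unset Strict Implicit. Unset Printing Implicit Defensive.
Import GRing.Theory.
Local Open Scope ring_scope.

(** * Divisibility and factorization in integral domains *)

Section RingDivisibility.
Variable R : comNzRingType.
Implicit Types x y z : R.

Lemma rdvd_refl x : rdvd x x. Proof. by exists 1; rewrite mul1r. Qed.
Lemma rdvd0 x : rdvd x 0. Proof. by exists 0; rewrite mul0r. Qed.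
Lemma rdvd1 x : rdvd 1 x. Proof. by exists x; rewrite mulr1. Qed.

Lemma rdvd_trans x y z : rdvd x y -> rdvd y z -> rdvd x z.
Proof. by move=> [c ->] [d ->]; exists (d * c); rewrite mulrA. Qed.

Lemma rdvd_mulr x y z : rdvd x y -> rdvd x (y * z).
Proof. by move=> [c ->]; exists (c * z); rewrite mulrAC. Qed.

Lemma rdvd_mull x y z : rdvd x y -> rdvd x (z * y).
Proof. by rewrite mulrC; apply: rdvd_mulr. Qed.

Lemma rdvd_mulIl x y : rdvd x (x * y). Proof. by exists y; rewrite mulrC. Qed.
Lemma rdvd_mulIr x y : rdvd x (y * x). Proof. by exists y. Qed.

Lemma rdvd_add x y z : rdvd x y -> rdvd x z -> rdvd x (y + z).
Proof. by move=> [c ->] [d ->]; exists (c + d); rewrite mulrDl. Qed.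

Lemma rdvd_sub x y z : rdvd x y -> rdvd x z -> rdvd x (y - z).
Proof. by move=> [c ->] [d ->]; exists (c - d); rewrite mulrBl. Qed.

Lemma rdvd_mul x y z w : rdvd x y -> rdvd z w -> rdvd (x * z) (y * w).
Proof. by move=> [c ->] [d ->]; exists (c * d); rewrite mulrACA. Qed.

Lemma rdvd_sum (I : Type) (r : seq I) (P : pred I) (F : I -> R) x :
  (forall i, P i -> rdvd x (F i)) -> rdvd x (\sum_(i <- r | P i) F i).
Proof.
move=> dvdF; elim/big_rec: _ => [|i y Pi]; first exact: rdvd0.
by apply: rdvd_add; apply: dvdF.
Qed.

Lemma rdvd_exp2l x m n : (m <= n)%N -> rdvd (x ^+ m) (x ^+ n).
Proof. by move=> lemn; exists (x ^+ (n - m)); rewrite -exprD subnK. Qed.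

End RingDivisibility.

Section PrimeElements.
Variable R : idomainType.
Implicit Types x y z p q c e : R.

Lemma rdvd_mul2r x y z : z != 0 -> rdvd (x * z) (y * z) -> rdvd x y.
Proof. by move=> nz_z [c]; rewrite mulrA => /(mulIf nz_z) ->; exists c. Qed.

Lemma rdvd_unit e x : e \is a GRing.unit -> rdvd e x.
Proof. by move=> Ue; exists (x * e^-1); rewrite mulrVK. Qed.

Lemma rdvd_antisym_unit x y : x != 0 -> rdvd x y -> rdvd y x ->
  exists2 c, c \is a GRing.unit & x = c * y.
Proof.
move=> nz_x [c def_y] [d def_x]; exists d => //.
have : x * (c * d) = x * 1 by rewrite mulr1 {2}def_x def_y; ring.
by move/(mulfI nz_x) => cd1; apply/unitrP; exists c; rewrite cd1 mulrC cd1.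
Qed.

Lemma prime_neq0 p : prime_elt p -> p != 0. Proof. by case. Qed.

Lemma prime_nunit p : prime_elt p -> p \isn't a GRing.unit. Proof. by case=> _ []. Qed.

Lemma prime_dvdM p x y : prime_elt p -> rdvd p (x * y) -> rdvd p x \/ rdvd p y.
Proof. by case=> _ [] _; apply. Qed.

Lemma prime_ndvd_unit p e : prime_elt p -> e \is a GRing.unit -> ~ rdvd p e.
Proof.
move=> pr_p Ue [c def_e]; move: (prime_nunit pr_p); rewrite def_e in Ue.
by rewrite unitrM in Ue; case/andP: Ue => _ ->.
Qed.

Lemma prime_ndvd1 p : prime_elt p -> ~ rdvd p 1.
Proof. by move=> pr_p; apply: prime_ndvd_unit pr_p (unitr1 _). Qed.

Lemma prime_dvdX p x n : prime_elt p -> rdvd p (x ^+ n) -> rdvd p x.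
Proof.
move=> pr_p; elim: n => [|n IHn]; first by rewrite expr0 => /(prime_ndvd1 pr_p).
by rewrite exprS => /(prime_dvdM pr_p) [//|/IHn].
Qed.

Lemma prime_ndvdM p x y : prime_elt p -> ~ rdvd p x -> ~ rdvd p y -> ~ rdvd p (x * y).
Proof. by move=> pr_p ndvd_x ndvd_y /(prime_dvdM pr_p) []. Qed.

Lemma prime_ndvdX p x n : prime_elt p -> ~ rdvd p x -> ~ rdvd p (x ^+ n).
Proof. by move=> pr_p ndvd_x /(prime_dvdX pr_p). Qed.

Lemma prime_dvd_prod p (I : Type) (r : seq I) (F : I -> R) :
  prime_elt p -> rdvd p (\prod_(i <- r) F i) -> exists i, rdvd p (F i).
Proof.
move=> pr_p; elim: r => [|i r IHr]; first by rewrite big_nil => /(prime_ndvd1 pr_p).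
by rewrite big_cons => /(prime_dvdM pr_p) [|/IHr //]; exists i.
Qed.

Lemma prime_dvd_prime p q : prime_elt p -> prime_elt q -> rdvd p q ->
  exists2 e, e \is a GRing.unit & q = e * p.
Proof.
move=> pr_p pr_q pq; have [c def_q] := pq.
apply: (rdvd_antisym_unit (prime_neq0 pr_q)) pq.
have : rdvd q (c * p) by rewrite -def_q; apply: rdvd_refl.
case/(prime_dvdM pr_q) => // -[d def_c]; case/negP: (prime_nunit pr_p).
have : q * (d * p) = q * 1 by rewrite mulr1 mulrCA mulrA -def_c -def_q.
by move/(mulfI (prime_neq0 pr_q)) => dp1; apply/unitrP; exists d; rewrite dp1 mulrC dp1.
Qed.

Lemma prime_mul_unit p e : prime_elt p -> e \is a GRing.unit -> prime_elt (e * p).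
Proof.
move=> pr_p Ue; have nz_e : e != 0 by apply: contraTneq Ue => ->; rewrite unitr0.
split; first exact: mulf_neq0 nz_e (prime_neq0 pr_p).
split; first by rewrite unitrM Ue /= prime_nunit.
move=> x y /(rdvd_trans (rdvd_mulIr p e)) /(prime_dvdM pr_p).
by case=> -[d ->]; [left|right]; exists (d * e^-1); rewrite -mulrA mulKr.
Qed.

Lemma prime_exp_dvd_cancel q c x m : prime_elt q -> ~ rdvd q c ->
  rdvd (q ^+ m) (c * x) -> rdvd (q ^+ m) x.
Proof.
move=> pr_q ndvd_c; elim: m x => [|m IHm] x; first by rewrite expr0 => _; apply: rdvd1.
move=> dvd_cx; have : rdvd q (c * x).
  by apply: rdvd_trans _ dvd_cx; rewrite exprS; apply: rdvd_mulIl.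
case/(prime_dvdM pr_q) => [/ndvd_c //|[y def_x]].
rewrite def_x exprSr; apply: rdvd_mul (rdvd_refl q); apply: IHm.
by apply: (rdvd_mul2r (prime_neq0 pr_q)); rewrite -mulrA -def_x -exprSr.
Qed.

End PrimeElements.

Lemma classical_ex_minn (P : nat -> Prop) : (exists n, P n) ->
  exists n, P n /\ forall m, (m < n)%N -> ~ P m.
Proof.
move=> [n Pn]; elim: n {-2}n (leqnn n) Pn => [|N IHN] n le_nN Pn.
  by exists n; split=> // m; rewrite (leqn0 n) in le_nN; move/eqP: le_nN => ->.
have [[m [lt_mn Pm]]|nosmaller] := classic (exists m, (m < n)%N /\ P m).
  by apply: (IHN m) => //; rewrite -ltnS; apply: leq_trans lt_mn le_nN.
by exists n; split=> // m lt_mn Pm; apply: nosmaller; exists m.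
Qed.

Section Factorizations.
Variable R : idomainType.
Implicit Types x y p q e : R.

Definition has_factorization x n := exists e (l : seq R),
  [/\ e \is a GRing.unit, size l = n, forall q, q \in l -> prime_elt q
    & x = e * \prod_(q <- l) q].

Lemma has_factorization_exists x :
  factorial_ring R -> x != 0 -> exists n, has_factorization x n.
Proof.
move=> factR nz_x; have [Ux|nUx] := boolP (x \is a GRing.unit).
  by exists 0%N, x, [::]; rewrite big_nil mulr1.
have [l [pr_l ->]] := factR x nz_x nUx.
by exists (size l), 1, l; rewrite mul1r unitr1.
Qed.

Lemma has_factorizationM x n y m :
  has_factorization x n -> has_factorization y m -> has_factorization (x * y) (n + m).
Proof.
move=> [e [l [Ue <- pr_l ->]]] [e' [l' [Ue' <- pr_l' ->]]].
exists (e * e'), (l ++ l'); split; first by rewrite unitrM Ue Ue'.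
- by rewrite size_cat.
- by move=> z; rewrite mem_cat => /orP [/pr_l|/pr_l'].
by rewrite big_cat /=; ring.
Qed.

Lemma has_factorization_primeM p x n : prime_elt p -> has_factorization (p * x) n ->
  exists m, n = m.+1 /\ has_factorization x m.
Proof.
move=> pr_p [e [l [Ue <- pr_l def_px]]].
elim: l e x Ue pr_l def_px => [|q l IHl] e x Ue pr_l def_px.
  rewrite big_nil mulr1 in def_px; case: (prime_ndvd_unit pr_p Ue).
  by rewrite -def_px; apply: rdvd_mulIl.
have pr_q : prime_elt q by apply: pr_l; rewrite mem_head.
have pr_l' r : r \in l -> prime_elt r by move=> lr; apply: pr_l; rewrite inE lr orbT.
rewrite big_cons mulrA in def_px.
have : rdvd p ((e * q) * \prod_(r <- l) r) by rewrite -def_px; apply: rdvd_mulIl.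
case/(prime_dvdM pr_p) => [/(prime_dvdM pr_p) [/(prime_ndvd_unit pr_p Ue) //|pq]|[y def_y]].
  have [c Uc def_q] := prime_dvd_prime pr_p pr_q pq.
  exists (size l); split=> //; exists (e * c), l; split=> //; first by rewrite unitrM Ue Uc.
  by apply: (mulfI (prime_neq0 pr_p)); rewrite def_px def_q; ring.
have [|m [def_m [e' [l' [Ue' def_l' pr_l'' def_y']]]]] := IHl 1 y (unitr1 _) pr_l'.
  by rewrite mul1r def_y mulrC.
exists m.+1; split; first by rewrite /= def_m.
exists (e * e'), (q :: l'); split; first by rewrite unitrM Ue Ue'.
- by rewrite /= def_l'.
- by move=> r; rewrite inE => /orP [/eqP ->|/pr_l''].
apply: (mulfI (prime_neq0 pr_p)); rewrite def_px def_y def_y' big_cons; ring.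
Qed.

Lemma has_factorization_factorial :
  (forall x, x != 0 -> exists n, has_factorization x n) -> factorial_ring R.
Proof.
move=> fact x nz_x nUx; have [n [e [[|q l] [Ue _ pr_l def_x]]]] := fact x nz_x.
  by move: nUx; rewrite def_x big_nil mulr1 Ue.
exists (e * q :: l); split; last by rewrite def_x !big_cons mulrA.
move=> z; rewrite inE => /orP [/eqP ->|lz]; last by apply: pr_l; rewrite inE lz orbT.
by apply: prime_mul_unit Ue; apply: pr_l; rewrite mem_head.
Qed.

Lemma prime_exp_dvd_bound p x n k : prime_elt p -> has_factorization x n ->
  rdvd (p ^+ k) x -> (k <= n)%N.
Proof.
move=> pr_p; elim: k x n => [//|k IHk] x n fact_x [c def_x].
have : has_factorization (p * (c * p ^+ k)) n by rewrite -mulrCA -exprS -def_x.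
case/(has_factorization_primeM pr_p) => m [-> fact_m].
by rewrite ltnS; apply: (IHk _ _ fact_m); exists c.
Qed.

Definition exact_dvd p n x := rdvd (p ^+ n) x /\ ~ rdvd (p ^+ n.+1) x.

Lemma exact_dvd_exists p x : factorial_ring R -> prime_elt p -> x != 0 ->
  exists n, exact_dvd p n x.
Proof.
move=> factR pr_p nz_x; have [N fact_x] := has_factorization_exists factR nz_x.
have [|[|n] [ndvd min_n]] := classical_ex_minn (P := fun k => ~ rdvd (p ^+ k) x).
- by exists N.+1 => /(prime_exp_dvd_bound pr_p fact_x); rewrite ltnn.
- by case: ndvd; rewrite expr0; apply: rdvd1.
by exists n; split=> //; apply: NNPP; apply: min_n.
Qed.

Lemma exact_dvd_unique p n m x : exact_dvd p n x -> exact_dvd p m x -> n = m.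
Proof.
move=> [dvd_n ndvd_n] [dvd_m ndvd_m]; case: (ltngtP n m) => // [lt_nm|lt_mn]; exfalso.
  by apply: ndvd_n; apply: rdvd_trans dvd_m; apply: rdvd_exp2l.
by apply: ndvd_m; apply: rdvd_trans dvd_n; apply: rdvd_exp2l.
Qed.

Lemma exact_dvd0 p x : ~ rdvd p x -> exact_dvd p 0 x.
Proof. by split; [rewrite expr0; apply: rdvd1|rewrite expr1]. Qed.

Lemma exact_dvdM p n m x y : prime_elt p -> exact_dvd p n x -> exact_dvd p m y ->
  exact_dvd p (n + m) (x * y).
Proof.
move=> pr_p [[x' def_x] ndvd_x] [[y' def_y] ndvd_y].
have ndvd_x' : ~ rdvd p x'.
  by move=> [c def_x']; apply: ndvd_x; exists c; rewrite def_x def_x' exprS; ring.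
have ndvd_y' : ~ rdvd p y'.
  by move=> [c def_y']; apply: ndvd_y; exists c; rewrite def_y def_y' exprS; ring.
have -> : x * y = (x' * y') * p ^+ (n + m) by rewrite def_x def_y exprD; ring.
split; first exact: rdvd_mulIr.
rewrite exprS => /(rdvd_mul2r (expf_neq0 _ (prime_neq0 pr_p))).
by case/(prime_dvdM pr_p).
Qed.

Lemma exact_dvd_unit p e : prime_elt p -> e \is a GRing.unit -> exact_dvd p 0 e.
Proof. by move=> pr_p Ue; apply/exact_dvd0/prime_ndvd_unit. Qed.

Lemma exact_dvd_self p : prime_elt p -> exact_dvd p 1 p.
Proof.
move=> pr_p; split; first by rewrite expr1; apply: rdvd_refl.
rewrite expr2 => pp_dvd_p; apply: (prime_ndvd1 pr_p).
by apply: (rdvd_mul2r (prime_neq0 pr_p)); rewrite mul1r.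
Qed.

Lemma exact_dvdX p n x k : prime_elt p -> exact_dvd p n x ->
  exact_dvd p (n * k) (x ^+ k).
Proof.
move=> pr_p ex_x; elim: k => [|k IHk]; last by rewrite exprS mulnS; apply: exact_dvdM.
by rewrite muln0 expr0; apply: exact_dvd_unit pr_p (unitr1 _).
Qed.

Lemma exact_dvd_prod p (I : Type) (r : seq I) (F : I -> R) (N : I -> nat) :
  prime_elt p -> (forall i, exact_dvd p (N i) (F i)) ->
  exact_dvd p (\sum_(i <- r) N i)%N (\prod_(i <- r) F i).
Proof.
move=> pr_p exF; elim: r => [|i r IHr]; last by rewrite !big_cons; apply: exact_dvdM.
by rewrite !big_nil; apply: exact_dvd_unit pr_p (unitr1 _).
Qed.

Lemma rdvd_of_exact_dvd x y : factorial_ring R -> x != 0 -> y != 0 ->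
  (forall q n, prime_elt q -> exact_dvd q n x -> exact_dvd q n y) -> rdvd x y.
Proof.
move=> factR /(has_factorization_exists factR) [k]; elim: k x y => [|k IHk] x y [e [l [Ue def_k pr_l ->]]] nz_y exxy.
  by move: def_k; case: l {pr_l exxy} => // _; rewrite big_nil mulr1; apply: rdvd_unit.
move: exxy def_k; case: l pr_l => // q l pr_l exxy [def_k].
have pr_q : prime_elt q by apply: pr_l; rewrite mem_head.
have pr_l' r : r \in l -> prime_elt r by move=> lr; apply: pr_l; rewrite inE lr orbT.
set x' := e * \prod_(r <- l) r.
have def_x : e * \prod_(r <- q :: l) r = q * x' by rewrite big_cons /x'; ring.
rewrite def_x in exxy *.
have nz_x' : x' != 0.
  rewrite /x' mulf_neq0 //; first by apply: contraTneq Ue => ->; rewrite unitr0.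
  by rewrite prodf_seq_neq0; apply/allP => r /pr_l' /prime_neq0.
have [n ex_x'] := exact_dvd_exists factR pr_q nz_x'.
have [[y' def_y] _] := exxy q (1 + n)%N pr_q (exact_dvdM pr_q (exact_dvd_self pr_q) ex_x').
set y'' := y' * q ^+ n; have {}def_y : y = q * y'' by rewrite def_y exprD expr1 /y''; ring.
have nz_y'' : y'' != 0 by apply: contraNneq nz_y => y0; rewrite def_y y0 mulr0.
suff dvd_x'y'' : rdvd x' y'' by rewrite def_y; exact: rdvd_mul (rdvd_refl q) dvd_x'y''.
apply: (IHk x' y'') => //; first by exists e, l.
move=> r m pr_r ex_x'r; have [j ex_qr] := exact_dvd_exists factR pr_r (prime_neq0 pr_q).
have [m' ex_y''] := exact_dvd_exists factR pr_r nz_y''.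
have := exxy r (j + m)%N pr_r (exact_dvdM pr_r ex_qr ex_x'r).
rewrite def_y => /(exact_dvd_unique (exact_dvdM pr_r ex_qr ex_y'')) /eqP.
by rewrite eqn_add2l => /eqP <-.
Qed.

End Factorizations.

(** * Gauss's lemma *)

Section GaussLemma.
Variable R : idomainType.
Implicit Types (c e : R) (g h q r : {poly R}).

Lemma rdvd_polyCP c g : rdvd c%:P g <-> forall i, rdvd c g`_i.
Proof.
split=> [[d ->] i|dvd_g]; first by rewrite coefMC; exists d`_i.
have [c0|nz_c] := eqVneq c 0.
  suff -> : g = 0 by apply: rdvd0.
  by apply/polyP => i; rewrite coef0; case: (dvd_g i) => d ->; rewrite c0 mulr0.
pose quot i := proj1_sig (constructive_indefinite_description _ (dvd_g i)).
have def_g i : g`_i = quot i * c by rewrite /quot; case: constructive_indefinite_description.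
exists (\poly_(i < size g) quot i); apply/polyP => i.
rewrite coefMC coef_poly; case: ltnP => [_|le_g_i]; first exact: def_g.
by rewrite nth_default ?mul0r.
Qed.

Lemma prime_polyC c : prime_elt c -> prime_elt c%:P.
Proof.
move=> pr_c; split; first by rewrite polyC_eq0 prime_neq0.
split.
  by rewrite poly_unitE size_polyC prime_neq0 //= coefC (negbTE (prime_nunit pr_c)).
move=> g h dvd_gh; apply: NNPP => /not_or_and [ndvd_g ndvd_h].
have first_ndvd (k : {poly R}) : ~ rdvd c%:P k ->
    exists i, ~ rdvd c k`_i /\ forall m, (m < i)%N -> rdvd c k`_m.
  move=> ndvd_k; have [|i [ndvd_i min_i]] := classical_ex_minn (P := fun i => ~ rdvd c k`_i).
    by apply: not_all_ex_not => /rdvd_polyCP.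
  by exists i; split=> // m /min_i /NNPP.
(* With [i], [j] the first coefficients of [g], [h] not divisible by [c], only
   the term [g_i h_j] of the coefficient of [X^(i+j)] escapes [c]. *)
have [i [ndvd_gi min_i]] := first_ndvd g ndvd_g.
have [j [ndvd_hj min_j]] := first_ndvd h ndvd_h.
have := proj1 (rdvd_polyCP c _) dvd_gh (i + j)%N; rewrite coefM.
have lt_i_ij : (i < (i + j).+1)%N by rewrite ltnS leq_addr.
rewrite (bigD1 (Ordinal lt_i_ij)) //= addKn => dvd_sum.
set S := \sum_(k < _ | _) _ in dvd_sum.
have dvd_S : rdvd c S.
  apply: rdvd_sum => k ne_k_i; have [lt_k_i|lt_i_k|eq_k_i] := ltngtP k i.
- exact/rdvd_mulr/min_i.
- by apply/rdvd_mull/min_j; have := ltn_ord k; move: lt_i_k; lia.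
- by move: ne_k_i; rewrite -val_eqE /= eq_k_i eqxx.
by have := rdvd_sub dvd_sum dvd_S; rewrite addrK => /(prime_dvdM pr_c) [].
Qed.

Lemma rdvd_polyXP g : rdvd 'X g <-> g`_0 = 0.
Proof.
split=> [[d ->]|g0_0]; first by rewrite coefMX.
exists (drop_poly 1 g); rewrite -{1}(poly_take_drop 1 g) expr1.
suff -> : take_poly 1 g = 0 by rewrite add0r.
by apply/polyP => -[|i]; rewrite coef_take_poly coef0.
Qed.

Lemma prime_polyX : prime_elt ('X : {poly R}).
Proof.
split; first by rewrite polyX_eq0.
split; first by rewrite poly_unitE size_polyX.
move=> g h; rewrite !rdvd_polyXP coefM big_ord1 subnn => /eqP.
by rewrite mulf_eq0 => /orP [] /eqP; [left|right].
Qed.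

Lemma prime_polyC_ndvdX c : prime_elt c -> ~ rdvd c%:P 'X.
Proof. by move=> pr_c /rdvd_polyCP /(_ 1%N); rewrite coefX eqxx; apply: prime_ndvd1. Qed.

Definition primitive_poly g := forall c, prime_elt c -> ~ rdvd c%:P g.

Lemma primitive_dvd q g : primitive_poly g -> rdvd q g -> primitive_poly q.
Proof. by move=> prim_g dvd_qg c pr_c /rdvd_trans /(_ dvd_qg); apply: prim_g. Qed.

Lemma size_poly_unit g : g \is a GRing.unit -> size g = 1%N.
Proof. by rewrite poly_unitE => /andP [/eqP]. Qed.

Hypothesis factR : factorial_ring R.

Lemma nonprimitive_split g : ~ primitive_poly g ->
  exists c g1, prime_elt c /\ g = c%:P * g1.
Proof.
move=> nprim_g; apply: NNPP => nosplit; apply: nprim_g => c pr_c [g1 def_g].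
by apply: nosplit; exists c, g1; rewrite mulrC.
Qed.

Lemma primitive_decomposition g : g != 0 ->
  exists c g', [/\ c != 0, g = c%:P * g' & primitive_poly g'].
Proof.
move=> nz_g; have nz_lg : lead_coef g != 0 by rewrite lead_coef_eq0.
have [n] := has_factorization_exists factR nz_lg; move: nz_lg.
elim: n g nz_g => [|n IHn] g nz_g _ fact_g; have [prim_g|] := classic (primitive_poly g).
- by exists 1, g; rewrite mul1r oner_neq0.
- case/nonprimitive_split=> c [g1 [pr_c def_g]].
  by move: fact_g; rewrite def_g lead_coefM lead_coefC => /(has_factorization_primeM pr_c) [m []].
- by exists 1, g; rewrite mul1r oner_neq0.
case/nonprimitive_split=> c [g1 [pr_c def_g]].
have nz_g1 : g1 != 0 by apply: contraNneq nz_g; rewrite def_g => ->; rewrite mulr0.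
move: fact_g; rewrite def_g lead_coefM lead_coefC.
case/(has_factorization_primeM pr_c) => m [[<-] fact_g1].
have nz_lg1 : lead_coef g1 != 0 by rewrite lead_coef_eq0.
have [c1 [g' [nz_c1 def_g1 prim_g']]] := IHn g1 nz_g1 nz_lg1 fact_g1.
exists (c * c1), g'; split=> //; first exact: mulf_neq0 (prime_neq0 pr_c) nz_c1.
by rewrite def_g1 polyCM mulrA.
Qed.

Lemma primitive_dvd_polyCM q c g : primitive_poly q -> c != 0 ->
  rdvd q (c%:P * g) -> rdvd q g.
Proof.
move=> prim_q nz_c; have [n] := has_factorization_exists factR nz_c.
elim: n c nz_c g => [|n IHn] c nz_c g [e [[|r l] [Ue def_n pr_l def_c]]] [w def_w] //.
  exists ((e^-1)%:P * w); rewrite -mulrA -def_w def_c big_nil mulr1 mulrA -polyCM.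
  by rewrite mulVr ?mul1r.
case: def_n; rewrite big_cons mulrCA in def_c => def_n.
have pr_r : prime_elt r by apply: pr_l; rewrite mem_head.
set c' := e * _ in def_c.
have nz_c' : c' != 0 by apply: contraNneq nz_c; rewrite def_c => ->; rewrite mulr0.
have : rdvd r%:P (w * q) by rewrite -def_w def_c polyCM -mulrA; apply: rdvd_mulIl.
case/(prime_dvdM (prime_polyC pr_r)) => [[w' def_w']|/(prim_q r pr_r) //].
apply: (IHn c' nz_c'); first by exists e, l; split=> // z lz; apply: pr_l; rewrite inE lz orbT.
exists w'; apply: (mulfI (prime_neq0 (prime_polyC pr_r))).
by rewrite mulrA -polyCM -def_c def_w def_w'; ring.
Qed.

Lemma primitive_size1_unit q : primitive_poly q -> size q = 1%N -> q \is a GRing.unit.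
Proof.
move=> prim_q size_q; rewrite poly_unitE size_q eqxx /=.
have nz_q0 : q`_0 != 0.
  by have := lead_coef_eq0 q; rewrite lead_coefE size_q => ->; rewrite -size_poly_eq0 size_q.
apply: NNPP => nUq0; have [[|r l] [pr_l def_q0]] := factR nz_q0 (introN idP nUq0).
  by move: nUq0; rewrite def_q0 big_nil unitr1.
apply: (prim_q r); first by apply: pr_l; rewrite mem_head.
apply/rdvd_polyCP => -[|i]; first by rewrite def_q0 big_cons; apply: rdvd_mulIl.
by rewrite nth_default ?size_q //; apply: rdvd0.
Qed.

Lemma min_size_ideal_pdvd q g r a b y a' b' : r != 0 -> r = a * q + b * g ->
  (forall r1 a1 b1, r1 != 0 -> r1 = a1 * q + b1 * g -> (size r <= size r1)%N) ->
  y = a' * q + b' * g -> exists k, rdvd r ((lead_coef r ^+ k)%:P * y).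
Proof.
move=> nz_r def_r min_r def_y; set k := Pdiv.Idomain.scalp y r; exists k.
have := Pdiv.Idomain.divp_eq y r; rewrite -mul_polyC -/k => def_ky.
set d := Pdiv.Idomain.divp y r in def_ky; set m := Pdiv.Idomain.modp y r in def_ky.
have [m0|nz_m] := eqVneq m 0; first by rewrite def_ky m0 addr0; apply: rdvd_mulIr.
have := Pdiv.Idomain.ltn_modpN0 y nz_r; rewrite -/m ltnNge => /negP []; apply: (min_r _
  ((lead_coef r ^+ k)%:P * a' - d * a) ((lead_coef r ^+ k)%:P * b' - d * b)) => //.
by apply: (addrI (d * r)); rewrite -def_ky def_y def_r; ring.
Qed.

Definition irreducible_elt g := [/\ g != 0, g \isn't a GRing.unit &
  forall a b, g = a * b -> a \is a GRing.unit \/ b \is a GRing.unit].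

Lemma primitive_irreducible_prime q :
  primitive_poly q -> irreducible_elt q -> prime_elt q.
Proof.
move=> prim_q [nz_q nUq irr_q]; split=> //; split=> // g h dvd_gh.
have [dvd_g|ndvd_g] := classic (rdvd q g); [by left|right].
(* A nonzero element [r] of least size in the ideal [(q, g)] pseudo-divides
   every element of that ideal, so its primitive part divides [q] and [g]. *)
pose in_ideal n := exists r a b, [/\ r != 0, size r = n & r = a * q + b * g].
have [|n [[r [a [b [nz_r def_n def_r]]]] min_n]] := classical_ex_minn (P := in_ideal).
  by exists (size q), q, 1, 0; split=> //; ring.
have min_r r1 a1 b1 : r1 != 0 -> r1 = a1 * q + b1 * g -> (size r <= size r1)%N.
  move=> nz_r1 def_r1; rewrite def_n leqNgt; apply/negP => /min_n; apply.
  by exists r1, a1, b1.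
have [c [r' [nz_c def_r' prim_r']]] := primitive_decomposition nz_r.
have nz_r' : r' != 0 by apply: contraNneq nz_r; rewrite def_r' => ->; rewrite mulr0.
have size_r' : size r = size r' by rewrite def_r' size_Cmul.
have [size_r1|size_r_ne1] := eqVneq (size r) 1%N.
  have [z def_z] : exists z, r = z%:P by exists r`_0; apply: size1_polyC; rewrite size_r1.
  have nz_z : z != 0 by rewrite -polyC_eq0 -def_z.
  apply: (primitive_dvd_polyCM prim_q nz_z); rewrite -def_z def_r mulrDl -!mulrA.
  by apply: rdvd_add; [apply: rdvd_mull; apply: rdvd_mulIl|apply: rdvd_mull].
have r'_dvd y a' b' : y = a' * q + b' * g -> rdvd r' y.
  move=> def_y; have [k dvd_ky] := min_size_ideal_pdvd nz_r def_r min_r def_y.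
  apply: (primitive_dvd_polyCM prim_r' (c := lead_coef r ^+ k)).
    by rewrite expf_neq0 ?lead_coef_eq0.
  by apply: rdvd_trans _ dvd_ky; rewrite def_r'; apply: rdvd_mulIr.
have [w def_q] := r'_dvd q 1 0 ltac:(ring).
case: (irr_q _ _ def_q) => [Uw|Ur']; last by case/eqP: size_r_ne1; rewrite size_r' size_poly_unit.
case: ndvd_g; apply: rdvd_trans _ (r'_dvd g 0 1 ltac:(ring)).
by exists w^-1; rewrite def_q mulKr.
Qed.

Lemma primitive_has_factorization g : primitive_poly g -> g != 0 ->
  exists k, has_factorization g k.
Proof.
move: {2}(size g) (leqnn (size g)) => n; elim: n g => [|n IHn] g le_g_n prim_g nz_g.
  by move: nz_g; rewrite -size_poly_eq0 -leqn0 le_g_n.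
have [size_g1|size_g_ne1] := eqVneq (size g) 1%N.
  by exists 0%N, g, [::]; rewrite big_nil mulr1 primitive_size1_unit.
have nUg : g \isn't a GRing.unit by apply: contra size_g_ne1 => /size_poly_unit ->.
have [irr_g|red_g] := classic (irreducible_elt g).
  exists 1%N, 1, [:: g]; rewrite big_seq1 mul1r unitr1; split=> // z.
  by rewrite inE => /eqP ->; apply: primitive_irreducible_prime.
have [a [b [def_g nUa nUb]]] : exists a b,
    [/\ g = a * b, a \isn't a GRing.unit & b \isn't a GRing.unit].
  apply: NNPP => nodec; apply: red_g; split=> // a b def_g.
  by apply: NNPP => /not_or_and [/negP nUa /negP nUb]; apply: nodec; exists a, b.
have nz_a : a != 0 by apply: contraNneq nz_g; rewrite def_g => ->; rewrite mul0r.
have nz_b : b != 0 by apply: contraNneq nz_g; rewrite def_g => ->; rewrite mulr0.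
have prim_a : primitive_poly a by apply: (primitive_dvd prim_g); rewrite def_g; apply: rdvd_mulIl.
have prim_b : primitive_poly b by apply: (primitive_dvd prim_g); rewrite def_g; apply: rdvd_mulIr.
have [le_a_n le_b_n] : (size a <= n)%N /\ (size b <= n)%N.
  have := size_mul nz_a nz_b; rewrite -def_g.
  have : size a != 0%N by rewrite size_poly_eq0.
  have : size b != 0%N by rewrite size_poly_eq0.
  have : size a != 1%N by apply: contra nUa => /eqP; apply: primitive_size1_unit.
  have : size b != 1%N by apply: contra nUb => /eqP; apply: primitive_size1_unit.
  by move: le_g_n; move: (size a) (size b) (size g) => sa sb sg; lia.
have [ka fact_a] := IHn a le_a_n prim_a nz_a.
have [kb fact_b] := IHn b le_b_n prim_b nz_b.
by exists (ka + kb)%N; rewrite def_g; apply: has_factorizationM.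
Qed.

Lemma has_factorization_polyC c n : has_factorization c n -> has_factorization c%:P n.
Proof.
move=> [e [l [Ue <- pr_l ->]]]; exists e%:P, (map polyC l); split.
- exact: rmorph_unit.
- by rewrite size_map.
- by move=> z /mapP [y /pr_l pr_y ->]; apply: prime_polyC.
by rewrite polyCM rmorph_prod big_map.
Qed.

Lemma factorial_poly : factorial_ring {poly R}.
Proof.
apply: has_factorization_factorial => g nz_g.
have [c [g' [nz_c def_g prim_g']]] := primitive_decomposition nz_g.
have nz_g' : g' != 0 by apply: contraNneq nz_g; rewrite def_g => ->; rewrite mulr0.
have [k' fact_g'] := primitive_has_factorization prim_g' nz_g'.
have [k fact_c] := has_factorization_exists factR nz_c.
by exists (k + k')%N; rewrite def_g; apply/has_factorizationM/fact_g'/has_factorization_polyC.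
Qed.

End GaussLemma.

(** * Ideals and symbolic powers *)

Section Ideals.
Variable A : comNzRingType.
Implicit Types (P : A -> Prop) (x y r : A).

Lemma ideal_mull P r x : is_ideal P -> P x -> P (r * x).
Proof. by move=> [_ [_ idP]]; apply: idP. Qed.

Lemma prime_ideal_nunit P x y : prime_ideal P -> y * x = 1 -> ~ P x.
Proof. by move=> [idP [nP1 _]] yx1 Px; apply: nP1; rewrite -yx1; apply: ideal_mull. Qed.

Lemma prime_idealX P x n : prime_ideal P -> P (x ^+ n) -> P x.
Proof.
move=> prP; elim: n => [|n IHn]; first by rewrite expr0 => /(proj1 (proj2 prP)).
by rewrite exprS => /(proj2 (proj2 prP)) [|/IHn].
Qed.

Lemma prime_ideal_prod P (I : eqType) (r : seq I) (F : I -> A) :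
  prime_ideal P -> P (\prod_(i <- r) F i) -> exists2 i, i \in r & P (F i).
Proof.
move=> prP; elim: r => [|i r IHr]; first by rewrite big_nil => /(proj1 (proj2 prP)).
rewrite big_cons => /(proj2 (proj2 prP)) [PFi|/IHr [j rj PFj]].
  by exists i; rewrite ?mem_head.
by exists j; rewrite // inE rj orbT.
Qed.

Lemma ideal_pow0 P n : ideal_pow P n 0.
Proof. by case: n => [//|n]; exists [::]; rewrite big_nil. Qed.

Lemma ideal_powD P n x y : ideal_pow P n x -> ideal_pow P n y -> ideal_pow P n (x + y).
Proof.
case: n => [//|n] [l [Pl ->]] [l' [Pl' ->]]; exists (l ++ l'); split; last by rewrite big_cat.
by move=> z; rewrite mem_cat => /orP [/Pl|/Pl'].
Qed.

Lemma ideal_pow_mull P n r x : ideal_pow P n x -> ideal_pow P n (r * x).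
Proof.
elim: n r x => [//|n IHn] r x [l [Pl ->]].
exists [seq (r * xy.1, xy.2) | xy <- l]; split.
  by move=> z /mapP [xy /Pl [Pxy1 Pxy2] ->]; split=> //; apply: IHn.
by rewrite big_map mulr_sumr; apply: eq_bigr => xy _; rewrite mulrA.
Qed.

Lemma ideal_powX P n x : P x -> ideal_pow P n (x ^+ n).
Proof.
move=> Px; elim: n => [//|n IHn]; exists [:: (x ^+ n, x)].
by rewrite big_seq1 exprSr; split=> // z; rewrite inE => /eqP ->.
Qed.

Lemma ideal_pow_succ P n x : ideal_pow P n.+1 x -> ideal_pow P n x.
Proof.
move=> [l [Pl ->]]; elim: l Pl => [|xy l IHl] Pl; first by rewrite big_nil; apply: ideal_pow0.
rewrite big_cons; apply: ideal_powD; last by apply: IHl => z lz; apply: Pl; rewrite inE lz orbT.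
by rewrite mulrC; apply: ideal_pow_mull; case: (Pl xy (mem_head _ _)).
Qed.

Lemma sym_pow_le P n m x : (n <= m)%N -> sym_pow P m x -> sym_pow P n x.
Proof.
elim: m => [|m IHm]; first by rewrite leqn0 => /eqP ->.
rewrite leq_eqVlt ltnS => /orP [/eqP -> //|le_nm [t [nPt Pmt]]].
by apply: IHm => //; exists t; split=> //; apply: ideal_pow_succ.
Qed.

Lemma ord_at_unique P x n m : ord_at P x n -> ord_at P x m -> n = m.
Proof.
move=> [Pn nPn] [Pm nPm]; case: (ltngtP n m) => // [lt_nm|lt_mn]; exfalso.
  by apply: nPn; apply: sym_pow_le Pm.
by apply: nPm; apply: sym_pow_le Pn.
Qed.

Lemma ord_at0 P x : prime_ideal P -> ~ P x -> ord_at P x 0.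
Proof.
move=> prP nPx; split; first by exists 1; split; [case: prP => _ []|].
move=> [t [nPt [l [Pl def_tx]]]].
have : P (t * x).
  rewrite def_tx; elim: l Pl {def_tx} => [|xy l IHl] Pl.
    by rewrite big_nil; case: prP => [[]].
  case: prP => [[_ [addP mulP]] _]; rewrite big_cons; apply: addP.
    by apply: mulP; case: (Pl xy (mem_head _ _)).
  by apply: IHl => z lz; apply: Pl; rewrite inE lz orbT.
by case/(proj2 (proj2 prP)).
Qed.

End Ideals.

Lemma prop_pred_ext (T : Type) (P Q : T -> Prop) : (forall x, P x <-> Q x) -> P = Q.
Proof.
by move=> PQ; apply: functional_extensionality => x; apply: propositional_extensionality.
Qed.

(** * The ring B[u,v]/(uv - f) *)

Lemma size_map_poly_le (aR rR : nzSemiRingType) (g : aR -> rR) (p : {poly aR}) :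
  (size (map_poly g p) <= size p)%N.
Proof. by rewrite map_polyE; apply: leq_trans (size_Poly _) _; rewrite size_map. Qed.

Section Evaluation.
Variables (B A : comNzRingType) (iota : {rmorphism B -> A}).
Implicit Types (u v : A) (P : {poly {poly B}}).

Definition ev1 u : {rmorphism {poly B} -> A} := horner_eval u \o map_poly iota.

Lemma ev1E u p : ev1 u p = (map_poly iota p).[u].
Proof. by rewrite /ev1 /= horner_evalE. Qed.

Lemma ev1C u c : ev1 u c%:P = iota c.
Proof. by rewrite ev1E map_polyC hornerC. Qed.

Lemma ev1X u : ev1 u 'X = u.
Proof. by rewrite ev1E map_polyX hornerX. Qed.

Lemma ev1Xn u n : ev1 u 'X^n = u ^+ n.
Proof. by rewrite rmorphXn ev1X. Qed.

Lemma ev2_sum u v P : ev2 iota u v P = \sum_(i < size P) ev1 u P`_i * v ^+ i.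
Proof.
apply: eq_bigr => i _; rewrite ev1E (horner_coef_wide _ (size_map_poly_le _ _)).
by congr (_ * _); apply: eq_bigr => j _; rewrite coef_map.
Qed.

Lemma ev2E u v P : ev2 iota u v P = (map_poly (ev1 u) P).[v].
Proof.
rewrite ev2_sum (horner_coef_wide _ (size_map_poly_le _ _)).
by apply: eq_bigr => i _; rewrite coef_map.
Qed.

Lemma ev2M u v P Q : ev2 iota u v (P * Q) = ev2 iota u v P * ev2 iota u v Q.
Proof. by rewrite !ev2E rmorphM hornerM. Qed.

Lemma ev2C u v p : ev2 iota u v p%:P = ev1 u p.
Proof. by rewrite ev2E map_polyC hornerC. Qed.

Lemma ev2_horner u v P : ev2 iota u v P = ((map_poly (map_poly iota) P).[v%:P]).[u].
Proof.
rewrite ev2_sum (horner_coef_wide _ (size_map_poly_le _ _)) horner_sum.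
by apply: eq_bigr => i _; rewrite coef_map -rmorphXn hornerM hornerC ev1E.
Qed.

Lemma ev2_swapXY u v P : ev2 iota v u (swapXY P) = ev2 iota u v P.
Proof. by rewrite !ev2_horner -swapXY_map horner2_swapXY. Qed.

End Evaluation.

Definition uvf_poly (B : nzRingType) (f : B) : {poly {poly B}} :=
  ('X : {poly B})%:P * 'X - (f%:P)%:P.

Lemma swapXY_uvf_poly (B : comNzRingType) (f : B) : swapXY (uvf_poly f) = uvf_poly f.
Proof.
by rewrite rmorphB rmorphM /= swapXY_X swapXY_polyC swapXY_polyC map_polyX map_polyC mulrC.
Qed.

Definition uvf_presentation (B A : comNzRingType) (iota : {rmorphism B -> A})
    (u v : A) (f : B) :=
  (forall x : A, exists P, ev2 iota u v P = x) /\
  (forall P, ev2 iota u v P = 0 <-> exists Q, P = Q * uvf_poly f).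

Lemma uvf_presentation_sym (B A : comNzRingType) (iota : {rmorphism B -> A}) u v f :
  uvf_presentation iota u v f -> uvf_presentation iota v u f.
Proof.
move=> [ev2_onto ev2_eq0]; split=> [x|P].
  by have [P <-] := ev2_onto x; exists (swapXY P); rewrite ev2_swapXY.
rewrite -[P]swapXYK ev2_swapXY ev2_eq0.
split=> -[Q def_P]; exists (swapXY Q).
  by rewrite def_P rmorphM /= swapXY_uvf_poly.
by rewrite -[swapXY P]swapXYK def_P rmorphM /= swapXY_uvf_poly.
Qed.

Section Chart.
Variables (B : idomainType) (A : comNzRingType) (iota : {rmorphism B -> A}).
Variables (u v : A) (f : B).
Hypothesis presA : uvf_presentation iota u v f.
Hypothesis nz_f : f != 0.
Hypothesis factB : factorial_ring B.

Local Notation ev1u := (ev1 iota u).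

Lemma size_uvf_poly : size (uvf_poly f) = 2%N.
Proof.
rewrite /uvf_poly -rmorphN size_MXaddC polyC_eq0 polyX_eq0 /=.
by rewrite size_polyC polyX_eq0.
Qed.

Lemma ev2_uvf_poly : ev2 iota u v (uvf_poly f) = u * v - iota f.
Proof.
rewrite ev2_sum size_uvf_poly !big_ord_recl big_ord0 addr0.
have -> : (uvf_poly f)`_(@ord0 1) = - f%:P by rewrite coefB coefMX !coefC /= sub0r.
have -> : (uvf_poly f)`_(bump 0 (@ord0 0)) = 'X by rewrite coefB coefMX !coefC /= subr0.
by rewrite rmorphN ev1C ev1X expr0 mulr1 expr1 addrC mulrC.
Qed.

Lemma uv_eq : u * v = iota f.
Proof.
by apply/eqP; rewrite -subr_eq0 -ev2_uvf_poly; apply/eqP/presA.2; exists 1; rewrite mul1r.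
Qed.

(* A multiple of [uv - f] has positive degree in [v]. *)
Lemma ev1_eq0 p : ev1u p = 0 -> p = 0.
Proof.
rewrite -(ev2C _ _ v) => /presA.2 [Q def_p].
have [Q0|nz_Q] := eqVneq Q 0; first by move: def_p; rewrite Q0 mul0r => /polyC_inj.
have := size_polyC_leq1 p; rewrite def_p size_mul ?size_uvf_poly //; last first.
  by rewrite -size_poly_eq0 size_uvf_poly.
by rewrite addn2 /=; rewrite -size_poly_eq0 in nz_Q; case: (size Q) nz_Q.
Qed.

Lemma ev1_inj : injective ev1u.
Proof.
move=> p q eq_pq; apply/eqP; rewrite -subr_eq0; apply/eqP/ev1_eq0.
by rewrite rmorphB eq_pq subrr.
Qed.

Lemma ev1_neq0 p : p != 0 -> ev1u p != 0.
Proof. by apply: contraNneq => /ev1_eq0 ->. Qed.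

Lemma ev1_cover a : exists k p, u ^+ k * a = ev1u p.
Proof.
have [P <-] := presA.1 a; rewrite ev2_sum.
exists (size P), (\sum_(i < size P) P`_i * 'X^(size P - i) * (f%:P) ^+ i).
rewrite rmorph_sum mulr_sumr; apply: eq_bigr => i _.
rewrite !rmorphM !rmorphXn ev1C ev1X -uv_eq exprMn.
by rewrite -{1}(subnK (ltnW (ltn_ord i))) exprD; ring.
Qed.

Lemma ev1_v_cover a : exists g y, a = ev1u g + v * y.
Proof.
have [P <-] := presA.1 a; rewrite ev2_sum.
case: (size P) => [|n]; first by exists 0, 0; rewrite big_ord0 rmorph0 mulr0 addr0.
rewrite big_ord_recl expr0 mulr1; exists P`_0, (\sum_(i < n) ev1u P`_(bump 0 i) * v ^+ i).
by congr (_ + _); rewrite mulr_sumr; apply: eq_bigr => i _; rewrite exprS; ring.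
Qed.

(* [u] is prime in [B[u][v]] and does not divide [uv - f]. *)
Lemma u_regular a : u * a = 0 -> a = 0.
Proof.
have pr_XC : prime_elt (('X : {poly B})%:P) by apply/prime_polyC/prime_polyX.
have [P <-] := presA.1 a.
have -> : u * ev2 iota u v P = ev2 iota u v (('X : {poly B})%:P * P) by rewrite ev2M ev2C ev1X.
move=> /presA.2 [Q def_XP].
have : rdvd ('X%:P) (Q * uvf_poly f) by rewrite -def_XP; apply: rdvd_mulIl.
case/(prime_dvdM pr_XC) => [[Q' def_Q]|]; last first.
  move/rdvd_polyCP/(_ 0%N)/rdvd_polyXP; rewrite /uvf_poly coefB coefMX eqxx coefC /=.
  by rewrite sub0r coefN coefC eqxx => /eqP; rewrite oppr_eq0 (negbTE nz_f).
apply/presA.2; exists Q'; apply: (mulfI (prime_neq0 pr_XC)).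
by rewrite def_XP def_Q; ring.
Qed.

Lemma uX_regular k a : u ^+ k * a = 0 -> a = 0.
Proof.
by elim: k a => [|k IHk] a; [rewrite expr0 mul1r|rewrite exprS -mulrA => /u_regular/IHk].
Qed.

Lemma ev1_cover_neq0 a k p : a != 0 -> u ^+ k * a = ev1u p -> p != 0.
Proof.
move=> nz_a def_p; apply: contraNneq nz_a => p0.
by apply/eqP/(uX_regular (k := k)); rewrite def_p p0 rmorph0.
Qed.

Lemma mulA_neq0 (x y : A) : x != 0 -> y != 0 -> x * y != 0.
Proof.
move=> nz_x nz_y; have [k [px def_px]] := ev1_cover x; have [l [py def_py]] := ev1_cover y.
have def_pxy : u ^+ (k + l) * (x * y) = ev1u (px * py).
  by rewrite rmorphM -def_px -def_py exprD; ring.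
have := mulf_neq0 (ev1_cover_neq0 nz_x def_px) (ev1_cover_neq0 nz_y def_py).
by apply: contraNneq => xy0; apply/eqP/ev1_eq0; rewrite -def_pxy xy0 mulr0.
Qed.

Lemma expA_neq0 (x : A) n : x != 0 -> x ^+ n != 0.
Proof.
move=> nz_x; elim: n => [|n IHn]; last by rewrite exprS mulA_neq0.
by rewrite expr0 oner_neq0.
Qed.

Lemma u_neq0 : u != 0.
Proof. by have := @ev1_neq0 'X; rewrite polyX_eq0 ev1X; apply. Qed.

(* [locdvd q m a]: [q ^+ m] divides [a] in [A[1/u] = B[X, 1/X]], with [X] acting as [u]. *)
Definition locdvd (q : {poly B}) m (a : A) :=
  exists k p, u ^+ k * a = ev1u p /\ rdvd (q ^+ m) p.

Lemma locdvd_rep q m a k p : prime_elt q -> ~ rdvd q 'X -> locdvd q m a ->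
  u ^+ k * a = ev1u p -> rdvd (q ^+ m) p.
Proof.
move=> pr_q ndvd_qX [k0 [p0 [def_p0 dvd_p0]]] def_p.
have : ev1u ('X^k0 * p) = ev1u ('X^k * p0) by rewrite !rmorphM !ev1Xn -def_p -def_p0; ring.
move/ev1_inj => eq_p; apply: (prime_exp_dvd_cancel (c := 'X^k0)) => //.
  by move/(prime_dvdX pr_q).
by rewrite eq_p; apply: rdvd_mull.
Qed.

Lemma locdvd_ev1 q m g : rdvd (q ^+ m) g -> locdvd q m (ev1u g).
Proof. by exists 0%N, g; rewrite expr0 mul1r. Qed.

Lemma locdvd0 q m : locdvd q m 0.
Proof. by exists 0%N, 0; rewrite mulr0 rmorph0; split=> //; apply: rdvd0. Qed.

Lemma locdvd_exp0 q a : locdvd q 0 a.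
Proof.
by have [k [p def_p]] := ev1_cover a; exists k, p; rewrite expr0; split=> //; apply: rdvd1.
Qed.

Lemma locdvdD q m a b : locdvd q m a -> locdvd q m b -> locdvd q m (a + b).
Proof.
move=> [k [p [def_p dvd_p]]] [l [r [def_r dvd_r]]].
exists (k + l)%N, ('X^l * p + 'X^k * r); split.
  by rewrite rmorphD !rmorphM !ev1Xn -def_p -def_r exprD; ring.
by apply: rdvd_add; apply: rdvd_mull.
Qed.

Lemma locdvd_mull q m b a : locdvd q m a -> locdvd q m (b * a).
Proof.
move=> [k [p [def_p dvd_p]]]; have [l [r def_r]] := ev1_cover b.
exists (l + k)%N, (r * p); split; last by apply: rdvd_mull.
by rewrite rmorphM -def_p -def_r exprD; ring.
Qed.

Lemma locdvdM q m n a b : locdvd q m a -> locdvd q n b -> locdvd q (m + n) (a * b).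
Proof.
move=> [k [p [def_p dvd_p]]] [l [r [def_r dvd_r]]].
exists (k + l)%N, (p * r); split; first by rewrite rmorphM -def_p -def_r exprD; ring.
by rewrite exprD; apply: rdvd_mul.
Qed.

Lemma locdvd_assoc q1 q2 e : e \is a GRing.unit -> q1 = e * q2 ->
  locdvd q1 1 = locdvd q2 1.
Proof.
move=> Ue def_q1; apply: prop_pred_ext => a.
split=> -[k [p [def_p [c def_c]]]]; exists k, p; split=> //.
  by exists (c * e); rewrite def_c !expr1 def_q1 mulrA.
by exists (c * e^-1); rewrite def_c !expr1 def_q1 -mulrA mulKr.
Qed.

Lemma is_ideal_locdvd q : is_ideal (locdvd q 1).
Proof.
split; first exact: locdvd0.
by split=> [a b|b a]; [apply: locdvdD|apply: locdvd_mull].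
Qed.

Lemma ideal_pow_locdvd q n a : ideal_pow (locdvd q 1) n a -> locdvd q n a.
Proof.
elim: n a => [|n IHn] a; first by move=> _; apply: locdvd_exp0.
move=> [l [Pl ->]]; elim: l Pl => [|xy l IHl] Pl.
  by rewrite big_nil; apply: locdvd0.
rewrite big_cons; apply: locdvdD; last by apply: IHl => z lz; apply: Pl; rewrite inE lz orbT.
by have [Pxy1 Pxy2] := Pl xy (mem_head _ _); rewrite -addn1; apply: locdvdM => //; apply: IHn.
Qed.

Lemma locdvd_self q : locdvd q 1 (ev1u q).
Proof. by apply: locdvd_ev1; rewrite expr1; apply: rdvd_refl. Qed.

Section LocalPrime.
Variable q : {poly B}.
Hypotheses (pr_q : prime_elt q) (ndvd_qX : ~ rdvd q 'X).

Lemma sym_pow_locdvd n a : sym_pow (locdvd q 1) n a <-> locdvd q n a.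
Proof.
split=> [[s [ns /ideal_pow_locdvd dvd_sa]]|[k [p [def_p [c def_c]]]]].
  have [j [ps def_ps]] := ev1_cover s; have [k [pa def_pa]] := ev1_cover a.
  have ndvd_ps : ~ rdvd q ps by move=> dvd_ps; apply: ns; exists j, ps; rewrite expr1.
  exists k, pa; split=> //; apply: (prime_exp_dvd_cancel pr_q ndvd_ps).
  apply: (locdvd_rep pr_q ndvd_qX dvd_sa (k := (j + k)%N)).
  by rewrite rmorphM -def_ps -def_pa exprD; ring.
exists (u ^+ k); split.
  move=> /(locdvd_rep pr_q ndvd_qX (k := 0%N) (p := 'X^k)); rewrite expr0 mul1r ev1Xn expr1.
  by move=> /(_ erefl) /(prime_dvdX pr_q).
rewrite def_p def_c rmorphM rmorphXn; apply: ideal_pow_mull.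
by apply: ideal_powX; apply: locdvd_ev1; rewrite expr1; apply: rdvd_refl.
Qed.

Lemma ord_at_locdvd a n k p : u ^+ k * a = ev1u p ->
  ord_at (locdvd q 1) a n <-> exact_dvd q n p.
Proof.
move=> def_p; rewrite /ord_at !sym_pow_locdvd; split=> [[dvd_n ndvd_n]|[dvd_n ndvd_n]].
  by split; [apply: locdvd_rep def_p|move=> dvd; apply: ndvd_n; exists k, p].
by split; [exists k, p|move=> /(locdvd_rep pr_q ndvd_qX) /(_ def_p)].
Qed.

Lemma prime_ideal_locdvd : prime_ideal (locdvd q 1).
Proof.
split; first exact: is_ideal_locdvd.
split.
  move=> /(locdvd_rep pr_q ndvd_qX (k := 0%N) (p := 1)); rewrite expr0 mul1r rmorph1 expr1.
  by move=> /(_ erefl); apply: prime_ndvd1.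
move=> x y dvd_xy; have [j [px def_px]] := ev1_cover x; have [k [py def_py]] := ev1_cover y.
have := locdvd_rep pr_q ndvd_qX dvd_xy (k := (j + k)%N) (p := px * py).
rewrite expr1 rmorphM -def_px -def_py exprD => /(_ ltac:(ring)) /(prime_dvdM pr_q).
by case=> dvd; [left; exists j, px|right; exists k, py]; rewrite expr1.
Qed.

Lemma locdvd_nu : ~ locdvd q 1 u.
Proof.
move=> /(locdvd_rep pr_q ndvd_qX (k := 0%N) (p := 'X)); rewrite expr0 mul1r ev1X expr1.
by move/(_ erefl).
Qed.

Lemma ord_at_locdvd_ev1 g n : ord_at (locdvd q 1) (ev1u g) n <-> exact_dvd q n g.
Proof.
have def_g : u ^+ 0 * ev1u g = ev1u g by rewrite expr0 mul1r.
exact: ord_at_locdvd def_g.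
Qed.

Lemma ord_at_locdvdM x y n m : ord_at (locdvd q 1) x n -> ord_at (locdvd q 1) y m ->
  ord_at (locdvd q 1) (x * y) (n + m).
Proof.
have [k [px def_px]] := ev1_cover x; have [l [py def_py]] := ev1_cover y.
have def_pxy : u ^+ (k + l) * (x * y) = ev1u (px * py).
  by rewrite rmorphM -def_px -def_py exprD; ring.
rewrite (ord_at_locdvd _ def_px) (ord_at_locdvd _ def_py) (ord_at_locdvd _ def_pxy).
exact: exact_dvdM.
Qed.

Lemma ord_at_locdvd_exists x : x != 0 -> exists n, ord_at (locdvd q 1) x n.
Proof.
move=> nz_x; have [k [p def_p]] := ev1_cover x.
have [n ex_n] := exact_dvd_exists (factorial_poly factB) pr_q (ev1_cover_neq0 nz_x def_p).
by exists n; apply/(ord_at_locdvd _ def_p).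
Qed.

End LocalPrime.

Lemma locdvd_sub_prime_ideal (Q : A -> Prop) : prime_ideal Q -> ~ Q u ->
  (exists x, x != 0 /\ Q x) ->
  exists q, [/\ prime_elt q, ~ rdvd q 'X & forall a, locdvd q 1 a -> Q a].
Proof.
move=> prQ nQu [x [nz_x Qx]]; have [idQ [_ primeQ]] := prQ.
have [k [p def_p]] := ev1_cover x.
have [n [c [l [Uc _ pr_l def_pc]]]] :=
  has_factorization_exists (factorial_poly factB) (ev1_cover_neq0 nz_x def_p).
have : Q (ev1u p) by rewrite -def_p; apply: ideal_mull.
rewrite def_pc rmorphM => /primeQ [Qc|].
  by case: (prime_ideal_nunit (y := ev1u c^-1) prQ _ Qc); rewrite -rmorphM mulVr ?rmorph1.
rewrite rmorph_prod => /(prime_ideal_prod prQ) [q /pr_l pr_q Qq].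
have ndvd_qX : ~ rdvd q 'X.
  move=> /(prime_dvd_prime pr_q (prime_polyX B)) [e Ue def_X]; apply: nQu.
  by rewrite -(ev1X iota u) def_X rmorphM; apply: ideal_mull.
exists q; split=> // a [j [pa [def_pa [d def_d]]]].
have : Q (u ^+ j * a) by rewrite def_pa def_d expr1 rmorphM; apply: ideal_mull.
by case/primeQ => // /(prime_idealX prQ).
Qed.

Lemma locdvd_sub_eq q1 q2 : prime_elt q1 -> prime_elt q2 -> ~ rdvd q2 'X ->
  (forall a, locdvd q1 1 a -> locdvd q2 1 a) -> locdvd q1 1 = locdvd q2 1.
Proof.
move=> pr_q1 pr_q2 ndvd_q2X sub12.
have := locdvd_rep pr_q2 ndvd_q2X (sub12 _ (locdvd_self q1)) (k := 0%N) (p := q1).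
rewrite expr0 mul1r expr1 => /(_ erefl) /(prime_dvd_prime pr_q2 pr_q1) [e Ue def_q1].
exact: locdvd_assoc Ue def_q1.
Qed.

Lemma height_one_locdvd q : prime_elt q -> ~ rdvd q 'X -> height_one (locdvd q 1).
Proof.
move=> pr_q ndvd_qX; split; first exact: prime_ideal_locdvd.
split; first by exists (ev1u q); split; [apply/ev1_neq0/prime_neq0|apply: locdvd_self].
move=> Q prQ subQ; have [|nQ0] := classic (forall x, Q x -> x = 0); [by left|right].
have [x /(imply_to_and (Q x)) [Qx /eqP nz_x]] := not_all_ex_not _ _ nQ0.
have nQu : ~ Q u by move/subQ; apply: locdvd_nu.
have [q1 [pr_q1 _ sub1]] := locdvd_sub_prime_ideal prQ nQu (ex_intro _ x (conj nz_x Qx)).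
have eq1 := locdvd_sub_eq pr_q1 pr_q ndvd_qX (fun a l1a => subQ a (sub1 a l1a)).
by move=> a; split=> [/subQ //|]; rewrite -eq1; apply: sub1.
Qed.

Lemma height_one_locdvdP (Q : A -> Prop) : height_one Q -> ~ Q u ->
  exists q, [/\ prime_elt q, ~ rdvd q 'X & Q = locdvd q 1].
Proof.
move=> [prQ [nz_Q minQ]] nQu; have [q [pr_q ndvd_qX subQ]] := locdvd_sub_prime_ideal prQ nQu nz_Q.
exists q; split=> //; case: (minQ _ (prime_ideal_locdvd pr_q ndvd_qX) subQ) => [q0|eqQ].
  by case/eqP: (ev1_neq0 (prime_neq0 pr_q)); apply: q0; apply: locdvd_self.
by apply: prop_pred_ext => a; rewrite eqQ.
Qed.

(* Write [a = ev1u g + v y]; multiplying by powers of [u] and using [uv = f]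
   shows that [c] divides [g]. *)
Lemma locdvd_polyC_sub c (Q : A -> Prop) : prime_ideal Q -> Q v -> Q (iota c) ->
  prime_elt c -> rdvd c f -> forall a, locdvd c%:P 1 a -> Q a.
Proof.
move=> [[_ [addQ mulQ]] _] Qv Qc pr_c [d def_f] a [k [p [def_p dvd_p]]].
have [g [y def_a]] := ev1_v_cover a; have [m [w def_w]] := ev1_cover y.
have : ev1u ('X^(m.+1) * p) = ev1u ('X^((k + m).+1) * g + 'X^k * f%:P * w).
  by rewrite rmorphD !rmorphM !ev1Xn ev1C -def_p -def_w -uv_eq def_a !exprS exprD; ring.
move/ev1_inj => def_Xg.
have [g' def_g] : rdvd c%:P g.
  apply: (prime_exp_dvd_cancel (m := 1) (prime_polyC pr_c) (c := 'X^((k + m).+1))).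
    by move/(prime_dvdX (prime_polyC pr_c)); apply: prime_polyC_ndvdX.
  rewrite expr1 (_ : _ * g = 'X^(m.+1) * p - 'X^k * f%:P * w); last by rewrite def_Xg addrK.
  apply: rdvd_sub; first by apply: rdvd_mull; rewrite expr1 in dvd_p.
  by exists ('X^k * d%:P * w); rewrite def_f polyCM; ring.
rewrite def_a; apply: addQ; last by rewrite mulrC; apply: mulQ.
by rewrite def_g rmorphM ev1C; apply: mulQ.
Qed.

End Chart.

(** * The divisor class group *)

Lemma In_of_mem (T : eqType) (x : T) (s : seq T) : x \in s -> List.In x s.
Proof. by elim: s => [//|y s IHs]; rewrite inE => /orP [/eqP ->|/IHs]; [left|right]. Qed.

Lemma HOP_inj (A : comNzRingType) (P1 P2 : HOP A) : sval P1 = sval P2 -> P1 = P2.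
Proof.
by case: P1 P2 => [P1 hP1] [P2 hP2] /= eqP12; subst P2; rewrite (proof_irrelevance _ hP1 hP2).
Qed.

Section ClassGroup.
Variables (B : idomainType) (A : comNzRingType) (iota : {rmorphism B -> A}).
Variables (u v : A) (f : B) (s : nat) (p : 'I_s -> B) (a : 'I_s -> nat).
Hypothesis factB : factorial_ring B.
Hypothesis nz_f : f != 0.
Hypothesis presA : uvf_presentation iota u v f.
Hypothesis pr_p : forall i, prime_elt (p i).
Hypothesis p_nassoc : forall i j, i != j -> ~ associated (p i) (p j).
Hypothesis a_gt0 : forall i, (0 < a i)%N.
Hypothesis def_f : f = \prod_(i < s) p i ^+ a i.

Let presAv := uvf_presentation_sym presA.

Local Notation ev1u := (ev1 iota u).
Local Notation ev1v := (ev1 iota v).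

Lemma prime_pC i : prime_elt ((p i)%:P : {poly B}).
Proof. exact: prime_polyC. Qed.

Lemma pC_ndvdX i : ~ rdvd ((p i)%:P) ('X : {poly B}).
Proof. exact: prime_polyC_ndvdX. Qed.

(* The component [D_i] of [{u = p_i = 0}]; it does not contain [v]. *)
Definition exc_ideal i := locdvd iota v ((p i)%:P) 1.

Definition exc_div i : HOP A :=
  exist _ (exc_ideal i) (height_one_locdvd presAv nz_f factB (prime_pC i) (@pC_ndvdX i)).

Lemma p_dvd_f i : rdvd (p i) f.
Proof.
rewrite def_f (bigD1 i) //=; apply: rdvd_mulr.
by rewrite -(prednK (a_gt0 i)) exprS; apply: rdvd_mulIl.
Qed.

Lemma pC_dvd_inj i j : rdvd ((p i)%:P) ((p j)%:P : {poly B}) -> i = j.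
Proof.
move/rdvd_polyCP/(_ 0%N); rewrite coefC eqxx => dvd_ij.
apply/eqP; apply: contraT => ne_ij; case: (p_nassoc ne_ij); split=> //.
have [e Ue def_pj] := prime_dvd_prime (pr_p i) (pr_p j) dvd_ij.
by exists e^-1; rewrite def_pj mulKr.
Qed.

Lemma exc_ideal_u i : exc_ideal i u.
Proof.
exists 1%N, f%:P; split; first by rewrite expr1 (uv_eq presAv) ev1C.
by have [c def_c] := p_dvd_f i; exists c%:P; rewrite expr1 def_c polyCM.
Qed.

Lemma exc_ideal_p i : exc_ideal i (iota (p i)).
Proof. by rewrite -(ev1C iota v); apply: locdvd_self. Qed.

Lemma exc_ideal_inj i j : exc_ideal i = exc_ideal j -> i = j.
Proof.
move=> eq_ij; have := exc_ideal_p j; rewrite -eq_ij.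
move=> /(locdvd_rep presAv (prime_pC i) (@pC_ndvdX i)).
by rewrite expr1 -(ev1C iota v) => /(_ 0%N _ (mul1r _)); apply: pC_dvd_inj.
Qed.

Definition avoids_u (P : HOP A) := ~ sval P u.

Lemma avoids_uP (P : HOP A) : avoids_u P ->
  exists q, [/\ prime_elt q, ~ rdvd q 'X & sval P = locdvd iota u q 1].
Proof. by move=> nPu; apply: height_one_locdvdP presA nz_f factB _ (proj2_sig P) nPu. Qed.

(* Otherwise [Q] would contain some [p_i], as [uv = f], hence the prime
   [locdvd p_i 1], which does not contain [u]. *)
Lemma height_one_u_nv (Q : A -> Prop) : height_one Q -> Q u -> ~ Q v.
Proof.
move=> [prQ [_ minQ]] Qu Qv.
have : Q (iota f) by rewrite -(uv_eq presA) mulrC; apply: ideal_mull (proj1 prQ) _.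
rewrite def_f rmorph_prod => /(prime_ideal_prod prQ) [i _].
rewrite rmorphXn => /(prime_idealX prQ) Qpi.
have subQ := locdvd_polyC_sub presA prQ Qv Qpi (pr_p i) (p_dvd_f i).
case: (minQ _ (prime_ideal_locdvd presA (prime_pC i) (@pC_ndvdX i)) subQ) => [loc0|eqQ].
  by case/eqP: (ev1_neq0 presA (prime_neq0 (prime_pC i))); apply/loc0/locdvd_self.
by apply: (locdvd_nu presA (prime_pC i) (@pC_ndvdX i)); apply/eqQ.
Qed.

Lemma HOP_cases (P : HOP A) : avoids_u P \/ exists i, P = exc_div i.
Proof.
case: (classic (sval P u)) => [Pu|]; [right|by left].
case: P Pu => Q htQ /= Qu; have nQv := height_one_u_nv htQ Qu.
have [q [pr_q ndvd_qX defQ]] := height_one_locdvdP presAv nz_f factB htQ nQv.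
have : rdvd (q ^+ 1) f%:P.
  apply: (locdvd_rep presAv pr_q ndvd_qX (a := u) (k := 1%N)); first by rewrite -defQ.
  by rewrite expr1 (uv_eq presAv) ev1C.
rewrite expr1 (_ : f%:P = \prod_(i < s) (p i)%:P ^+ a i); last first.
  by rewrite def_f rmorph_prod; apply: eq_bigr => i _; rewrite rmorphXn.
move=> /(prime_dvd_prod pr_q) [i /(prime_dvdX pr_q) dvd_q_pi].
exists i; apply: HOP_inj => /=; rewrite defQ /exc_ideal.
have [e Ue def_pi] := prime_dvd_prime pr_q (prime_pC i) dvd_q_pi.
by rewrite (locdvd_assoc _ _ Ue def_pi).
Qed.

(* The order of [x] along [P]; [hord P 0] is unspecified. *)
Definition hord (P : HOP A) (x : A) : nat :=
  epsilon (inhabits 0%N) (fun n => ord_at (sval P) x n).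

Lemma ord_at_exists (P : HOP A) x : x != 0 -> exists n, ord_at (sval P) x n.
Proof.
move=> nz_x; case: (HOP_cases P) => [/avoids_uP [q [pr_q ndvd_qX ->]]|[i ->]].
  exact: ord_at_locdvd_exists presA nz_f factB _ pr_q ndvd_qX _ nz_x.
exact: ord_at_locdvd_exists presAv nz_f factB _ (prime_pC i) (@pC_ndvdX i) _ nz_x.
Qed.

Lemma hord_eq (P : HOP A) x n : ord_at (sval P) x n -> hord P x = n.
Proof.
move=> ord_n; have := epsilon_spec (inhabits 0%N) _ (ex_intro _ n ord_n).
by move/ord_at_unique; apply.
Qed.

Lemma hordP (P : HOP A) x : x != 0 -> ord_at (sval P) x (hord P x).
Proof. by move=> /(ord_at_exists P) [n ord_n]; rewrite (hord_eq ord_n). Qed.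

Lemma hordM (P : HOP A) x y : x != 0 -> y != 0 -> hord P (x * y) = (hord P x + hord P y)%N.
Proof.
move=> nz_x nz_y; apply: hord_eq; have := hordP P nz_x; have := hordP P nz_y.
case: (HOP_cases P) => [/avoids_uP [q [pr_q ndvd_qX ->]]|[i ->]] ord_y ord_x.
  exact: ord_at_locdvdM presA _ pr_q ndvd_qX _ _ _ _ ord_x ord_y.
exact: ord_at_locdvdM presAv _ (prime_pC i) (@pC_ndvdX i) _ _ _ _ ord_x ord_y.
Qed.

Lemma hord_unit (P : HOP A) x y : y * x = 1 -> hord P x = 0%N.
Proof.
move=> yx1; have prP := proj1 (proj2_sig P).
by apply/hord_eq/ord_at0 => //; apply: prime_ideal_nunit prP yx1.
Qed.

Lemma hordX (P : HOP A) x n : x != 0 -> hord P (x ^+ n) = (n * hord P x)%N.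
Proof.
move=> nz_x; elim: n => [|n IHn]; first by rewrite expr0 mul0n (@hord_unit _ 1 1) ?mulr1.
by rewrite exprS hordM ?(expA_neq0 presA nz_f) // IHn mulSn.
Qed.

Lemma hord_avoids_u (P : HOP A) : avoids_u P -> hord P u = 0%N.
Proof. by move=> nPu; apply/hord_eq/ord_at0 => //; case: (proj2_sig P). Qed.

Lemma exact_dvd_pC_f i : exact_dvd ((p i)%:P) (a i) (f%:P : {poly B}).
Proof.
have -> : f%:P = \prod_(j < s) (p j)%:P ^+ a j.
  by rewrite def_f rmorph_prod; apply: eq_bigr => j _; rewrite rmorphXn.
have ex_j j : exact_dvd ((p i)%:P) (if j == i then a i else 0%N) ((p j)%:P ^+ a j).
  case: eqP => [->|ne_ji].
    rewrite -{1}[a i]mul1n.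
    exact: exact_dvdX (prime_pC i) (exact_dvd_self (prime_pC i)).
  by apply: exact_dvd0 => /(prime_dvdX (prime_pC i)) /pC_dvd_inj eq_ij; apply: ne_ji.
by have := exact_dvd_prod (index_enum 'I_s) (prime_pC i) ex_j; rewrite -big_mkcond big_pred1_eq.
Qed.

Lemma hord_exc_u i : hord (exc_div i) u = a i.
Proof.
apply: hord_eq; have def_f1 : v ^+ 1 * u = ev1v f%:P by rewrite expr1 (uv_eq presAv) ev1C.
exact/(ord_at_locdvd presAv (prime_pC i) (@pC_ndvdX i) _ def_f1)/exact_dvd_pC_f.
Qed.

Lemma hord_ev1 (P : HOP A) q g n : sval P = locdvd iota u q 1 -> prime_elt q ->
  ~ rdvd q 'X -> g != 0 -> hord P (ev1u g) = n <-> exact_dvd q n g.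
Proof.
move=> defP pr_q ndvd_qX nz_g; rewrite -(ord_at_locdvd_ev1 presA pr_q ndvd_qX) -defP.
split=> [<-|/hord_eq //]; exact/hordP/(ev1_neq0 presA).
Qed.
Arguments hord_ev1 [P q g n].

Lemma polyX_ndvd_prime (q : {poly B}) : prime_elt q -> ~ rdvd q 'X -> ~ rdvd 'X q.
Proof.
move=> pr_q ndvd_qX /(prime_dvd_prime (prime_polyX B) pr_q) [e Ue def_q].
by apply: ndvd_qX; exists e^-1; rewrite def_q mulKr.
Qed.

Definition hop_of q (pr_q : prime_elt q) (ndvd_qX : ~ rdvd q 'X) : HOP A :=
  exist _ (locdvd iota u q 1) (height_one_locdvd presA nz_f factB pr_q ndvd_qX).

Lemma hop_of_avoids_u q pr_q ndvd_qX : avoids_u (@hop_of q pr_q ndvd_qX).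
Proof. exact: (locdvd_nu presA pr_q ndvd_qX). Qed.

Lemma hord_ev1_prime_other (P Q0 : HOP A) q0 : prime_elt q0 ->
  sval Q0 = locdvd iota u q0 1 -> avoids_u P -> P <> Q0 -> hord P (ev1u q0) = 0%N.
Proof.
move=> pr_q0 defQ0 nPu neq_PQ0; have [q [pr_q ndvd_qX defP]] := avoids_uP nPu.
apply/(hord_ev1 defP pr_q ndvd_qX (prime_neq0 pr_q0))/exact_dvd0 => dvd_qq0.
apply: neq_PQ0; apply: HOP_inj; rewrite defP defQ0.
by have [e Ue def_q0] := prime_dvd_prime pr_q pr_q0 dvd_qq0; rewrite (locdvd_assoc _ _ Ue def_q0).
Qed.

Definition represents (D : HOP A -> int) (g h : {poly B}) :=
  [/\ g != 0, h != 0, ~ rdvd 'X g, ~ rdvd 'X h &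
    forall P, avoids_u P -> D P = (hord P (ev1u g))%:Z - (hord P (ev1u h))%:Z].

Definition exc_ord (g h : {poly B}) i : int :=
  (hord (exc_div i) (ev1u g))%:Z - (hord (exc_div i) (ev1u h))%:Z.

Lemma exc_ordM g1 h1 g2 h2 i : g1 != 0 -> h1 != 0 -> g2 != 0 -> h2 != 0 ->
  exc_ord (g1 * g2) (h1 * h2) i = exc_ord g1 h1 i + exc_ord g2 h2 i.
Proof. by move=> *; rewrite /exc_ord !rmorphM !hordM ?(ev1_neq0 presA) //; lia. Qed.

Lemma represents_ext D D' g h : (forall P, avoids_u P -> D P = D' P) ->
  represents D g h -> represents D' g h.
Proof.
by move=> eqDD' [nz_g nz_h ndvd_g ndvd_h repD]; split=> // P nPu; rewrite -eqDD' ?repD.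
Qed.

Lemma represents_add D1 D2 g1 h1 g2 h2 : represents D1 g1 h1 -> represents D2 g2 h2 ->
  represents (fun P => D1 P + D2 P) (g1 * g2) (h1 * h2).
Proof.
move=> [nz_g1 nz_h1 ndvd_g1 ndvd_h1 rep1] [nz_g2 nz_h2 ndvd_g2 ndvd_h2 rep2].
split; rewrite ?mulf_neq0 //; try exact: prime_ndvdM (prime_polyX B) _ _.
by move=> P nPu; rewrite rep1 // rep2 // !rmorphM !hordM ?(ev1_neq0 presA) //; lia.
Qed.

Lemma represents_opp D g h : represents D g h -> represents (fun P => - D P) h g.
Proof. by move=> [nz_g nz_h ndvd_g ndvd_h repD]; split=> // P nPu; rewrite repD // opprB. Qed.

Lemma represents_exact_dvd D g h g' h' : represents D g h -> represents D g' h' ->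
  forall q n, prime_elt q -> exact_dvd q n (g * h') -> exact_dvd q n (g' * h).
Proof.
move=> [nz_g nz_h ndvd_g ndvd_h repD] [nz_g' nz_h' ndvd_g' ndvd_h' repD'] q n pr_q ex_n.
have [dvd_qX|ndvd_qX] := classic (rdvd q 'X).
  have [e Ue def_X] := prime_dvd_prime pr_q (prime_polyX B) dvd_qX.
  have ndvdq y : ~ rdvd 'X y -> ~ rdvd q y.
    move=> ndvd_y [c def_y]; apply: ndvd_y.
    by exists (c * e^-1); rewrite def_y def_X -mulrA mulKr.
  have ex_0 := exact_dvd0 (ndvdq _ (prime_ndvdM (prime_polyX B) ndvd_g ndvd_h')).
  rewrite -(exact_dvd_unique ex_0 ex_n).
  exact/exact_dvd0/ndvdq/(prime_ndvdM (prime_polyX B)).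
set P := hop_of pr_q ndvd_qX; have nPu : avoids_u P by apply: hop_of_avoids_u.
have := repD P nPu; rewrite repD' // => eq_D.
rewrite -(hord_ev1 (P := P)) ?mulf_neq0 // rmorphM hordM ?(ev1_neq0 presA) //.
rewrite -(hord_ev1 (P := P) _ pr_q ndvd_qX) ?mulf_neq0 // in ex_n.
rewrite -ex_n rmorphM hordM ?(ev1_neq0 presA) //; lia.
Qed.

Lemma represents_unique D g h g' h' : represents D g h -> represents D g' h' ->
  forall i, exc_ord g h i = exc_ord g' h' i.
Proof.
move=> repD repD' i; have factBX := factorial_poly factB.
have [nz_g nz_h _ _ _] := repD; have [nz_g' nz_h' _ _ _] := repD'.
have [nz_gh' nz_g'h] := (mulf_neq0 nz_g nz_h', mulf_neq0 nz_g' nz_h).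
have dvd1 := rdvd_of_exact_dvd factBX nz_gh' nz_g'h (represents_exact_dvd repD repD').
have dvd2 := rdvd_of_exact_dvd factBX nz_g'h nz_gh' (represents_exact_dvd repD' repD).
have [c Uc def_gh'] := rdvd_antisym_unit nz_gh' dvd1 dvd2.
have hord_c : hord (exc_div i) (ev1u c) = 0%N.
  by apply: (@hord_unit _ _ (ev1u c^-1)); rewrite -rmorphM mulVr ?rmorph1.
have nz_c : c != 0 by apply: contraTneq Uc => ->; rewrite unitr0.
have : hord (exc_div i) (ev1u (g * h')) = hord (exc_div i) (ev1u (c * (g' * h))).
  by rewrite def_gh'.
rewrite !rmorphM.
rewrite !hordM ?(ev1_neq0 presA) ?(mulA_neq0 presA nz_f) ?(ev1_neq0 presA) //.
by rewrite /exc_ord; move: hord_c; lia.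
Qed.

Definition point_div (Q0 : HOP A) (z : int) (P : HOP A) : int :=
  if excluded_middle_informative (P = Q0) then z else 0.

Lemma point_div_eq Q0 z : point_div Q0 z Q0 = z.
Proof. by rewrite /point_div; case: excluded_middle_informative. Qed.

Lemma point_div_neq Q0 z P : P <> Q0 -> point_div Q0 z P = 0.
Proof. by rewrite /point_div; case: excluded_middle_informative. Qed.

Lemma represents_point_nat (Q0 : HOP A) (n : nat) : avoids_u Q0 ->
  exists g, represents (point_div Q0 n%:Z) g 1.
Proof.
move=> /avoids_uP [q0 [pr_q0 ndvd_q0X defQ0]].
have ndvd_X1 : ~ rdvd ('X : {poly B}) 1 by apply/prime_ndvd1/prime_polyX.
exists (q0 ^+ n); split; rewrite ?oner_neq0 ?expf_neq0 ?prime_neq0 //.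
  exact/prime_ndvdX/polyX_ndvd_prime/ndvd_q0X/pr_q0/prime_polyX.
move=> P nPu; rewrite rmorph1 (@hord_unit _ 1 1) ?mulr1 // subr0 rmorphXn hordX; last first.
  exact/(ev1_neq0 presA)/prime_neq0.
have [->|neq_PQ0] := classic (P = Q0); last first.
  by rewrite point_div_neq // (hord_ev1_prime_other pr_q0 defQ0) ?muln0.
rewrite point_div_eq; have := hord_ev1 defQ0 pr_q0 ndvd_q0X (prime_neq0 pr_q0).
by move/(_ 1%N)/proj2/(_ (exact_dvd_self pr_q0)) ->; rewrite muln1.
Qed.

Lemma represents_point (Q0 : HOP A) (z : int) : avoids_u Q0 ->
  exists g h, represents (point_div Q0 z) g h.
Proof.
move=> nQ0u; case: z => n; first by have [g repD] := represents_point_nat n nQ0u; exists g, 1.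
have [g /represents_opp repD] := represents_point_nat n.+1 nQ0u; exists 1, g.
apply: represents_ext repD => P _; rewrite /point_div NegzE.
by case: excluded_middle_informative.
Qed.

Lemma represents_exists D : weil_div D -> exists g h, represents D g h.
Proof.
case=> l suppD.
have {suppD} : forall P, avoids_u P -> D P <> 0 -> List.In (sval P) l by move=> P _ /suppD.
elim: l D => [|P0 l IHl] D suppD.
  have ndvd_X1 : ~ rdvd ('X : {poly B}) 1 by apply/prime_ndvd1/prime_polyX.
  exists 1, 1; split; rewrite ?oner_neq0 // => P nPu.
  by rewrite rmorph1 subrr; apply: NNPP => /(suppD P nPu).
have [[Q0 [nQ0u defQ0]]|noQ0] := classic (exists Q0, avoids_u Q0 /\ sval Q0 = P0); last first.
  by apply: IHl => P nPu /(suppD P nPu) [eqP0|//]; case: noQ0; exists P.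
have [g0 [h0 rep0]] := represents_point (D Q0) nQ0u.
have [|g [h repD']] := IHl (fun P => D P - point_div Q0 (D Q0) P).
  move=> P nPu; have [->|neq_PQ0] := classic (P = Q0); first by rewrite point_div_eq subrr.
  rewrite point_div_neq // subr0 => /(suppD P nPu) [eqP0|//].
  by case: neq_PQ0; apply: HOP_inj; rewrite -eqP0 defQ0.
exists (g * g0), (h * h0); apply: represents_ext (represents_add repD' rep0) => P _.
exact: subrK.
Qed.

Definition rep_of (D : HOP A -> int) : {poly B} * {poly B} :=
  epsilon (inhabits (1, 1)) (fun gh => represents D gh.1 gh.2).

(* The coefficients along [D_1, ..., D_s] of [D - div (g / h)], where
   [div (g / h)] agrees with [D] away from [V(u)]. *)
Definition cl_coord (D : HOP A -> int) (i : 'I_s) : int :=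
  D (exc_div i) - exc_ord (rep_of D).1 (rep_of D).2 i.

Lemma cl_coord_rep D g h : represents D g h ->
  forall i, cl_coord D i = D (exc_div i) - exc_ord g h i.
Proof.
move=> repD i; congr (_ - _); apply: (represents_unique _ repD).
exact: epsilon_spec (inhabits (1, 1)) (fun gh => represents D gh.1 gh.2) (ex_intro _ (g, h) repD).
Qed.

Lemma cl_coordD D1 D2 : weil_div D1 -> weil_div D2 ->
  forall i, cl_coord (fun P => D1 P + D2 P) i = cl_coord D1 i + cl_coord D2 i.
Proof.
move=> /represents_exists [g1 [h1 rep1]] /represents_exists [g2 [h2 rep2]] i.
rewrite (cl_coord_rep (represents_add rep1 rep2)) (cl_coord_rep rep1) (cl_coord_rep rep2).
have [nz_g1 nz_h1 _ _ _] := rep1; have [nz_g2 nz_h2 _ _ _] := rep2.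
by rewrite exc_ordM //; lia.
Qed.

Lemma cl_coord_onto z : exists D, weil_div D /\
  in_span (fun i => (a i)%:Z) (fun i => cl_coord D i - z i).
Proof.
pose D P := \sum_(i < s) point_div (exc_div i) (z i) P.
have D_exc i : D (exc_div i) = z i.
  rewrite /D (bigD1 i) //= point_div_eq big1 ?addr0 // => j ne_ji.
  by apply: point_div_neq => /(congr1 sval) /exc_ideal_inj eq_ij; rewrite eq_ij eqxx in ne_ji.
have ndvd_X1 : ~ rdvd ('X : {poly B}) 1 by apply/prime_ndvd1/prime_polyX.
have repD : represents D 1 1.
  split; rewrite ?oner_neq0 // => P nPu; rewrite subrr /D big1 // => i _.
  by apply: point_div_neq => eqP; apply: nPu; rewrite eqP; apply: exc_ideal_u.
exists D; split.
  exists (List.map exc_ideal (enum 'I_s)) => P nzDP.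
  have [i ->] : exists i, P = exc_div i.
    apply: NNPP => noi; apply: nzDP; rewrite /D big1 // => i _.
    by apply: point_div_neq => eqP; apply: noi; exists i.
  by apply/List.in_map/In_of_mem; rewrite mem_enum.
exists 0 => i; rewrite (cl_coord_rep repD) D_exc /exc_ord.
by rewrite subrr subr0 mul0r subrr.
Qed.

Lemma is_div_of_hord x : x != 0 -> is_div_of x (fun P => (hord P x)%:Z).
Proof. by move=> nz_x P; exists (hord P x); split=> //; apply: hordP. Qed.

Lemma is_div_ofE x Dx : is_div_of x Dx -> forall P, Dx P = (hord P x)%:Z.
Proof. by move=> divx P; have [n [ord_n ->]] := divx P; rewrite (hord_eq ord_n). Qed.

Lemma principal_div_of D x y : x != 0 -> y != 0 ->
  (forall P, D P = (hord P x)%:Z - (hord P y)%:Z) -> principal_div D.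
Proof.
move=> nz_x nz_y defD; exists x, y, (fun P => (hord P x)%:Z), (fun P => (hord P y)%:Z).
do 2!split=> //; split; first exact: is_div_of_hord.
by split; first exact: is_div_of_hord.
Qed.

Lemma ev1_Xfree_cover x : x != 0 ->
  exists k m g, [/\ g != 0, ~ rdvd 'X g & u ^+ k * x = u ^+ m * ev1u g].
Proof.
move=> nz_x; have [k [q def_q]] := ev1_cover presA x.
have nz_q := ev1_cover_neq0 presA nz_f nz_x def_q.
have [m [[g def_g] ndvd_g]] := exact_dvd_exists (factorial_poly factB) (prime_polyX B) nz_q.
exists k, m, g; split.
- by apply: contraNneq nz_q; rewrite def_g => ->; rewrite mul0r.
- by move=> [c def_gc]; apply: ndvd_g; exists c; rewrite def_g def_gc exprSr; ring.
by rewrite def_q def_g rmorphM ev1Xn mulrC.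
Qed.

Lemma hord_uX_ev1 P x k m g : x != 0 -> g != 0 -> u ^+ k * x = u ^+ m * ev1u g ->
  (hord P x + k * hord P u = m * hord P u + hord P (ev1u g))%N.
Proof.
move=> nz_x nz_g /(congr1 (hord P)).
have nz_uX n : u ^+ n != 0 by apply: expA_neq0 presA nz_f _ _ (u_neq0 presA).
by rewrite !hordM ?nz_uX ?(ev1_neq0 presA) // !hordX ?(u_neq0 presA) // addnC.
Qed.

Lemma cl_coord_span_principal D : weil_div D ->
  in_span (fun i => (a i)%:Z) (cl_coord D) -> principal_div D.
Proof.
move=> /represents_exists [g [h repD]] [K defK]; have [nz_g nz_h _ _ repDu] := repD.
have [n [m defK']] : exists n m : nat, K = n%:Z - m%:Z.
  by case: K {defK} => n; [exists n, 0%N; rewrite subr0|exists 0%N, n.+1; rewrite NegzE sub0r].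
have nz_uX k : u ^+ k != 0 by apply: expA_neq0 presA nz_f _ _ (u_neq0 presA).
have nz_x := mulA_neq0 presA nz_f (nz_uX n) (ev1_neq0 presA nz_g).
have nz_y := mulA_neq0 presA nz_f (nz_uX m) (ev1_neq0 presA nz_h).
apply: (principal_div_of nz_x nz_y) => P.
rewrite !hordM ?nz_uX ?(ev1_neq0 presA) // !hordX ?(u_neq0 presA) //.
case: (HOP_cases P) => [nPu|[i ->]]; first by rewrite repDu // hord_avoids_u //; lia.
by move: (defK i); rewrite (cl_coord_rep repD) hord_exc_u /exc_ord defK'; nia.
Qed.

Lemma principal_cl_coord_span D : principal_div D ->
  in_span (fun i => (a i)%:Z) (cl_coord D).
Proof.
move=> [x [y [Dx [Dy [nz_x [nz_y [divx [divy defD]]]]]]]].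
have [k [m [gx [nz_gx ndvd_gx def_x]]]] := ev1_Xfree_cover nz_x.
have [k' [m' [gy [nz_gy ndvd_gy def_y]]]] := ev1_Xfree_cover nz_y.
have repD : represents D gx gy.
  split=> // P nPu; rewrite defD (is_div_ofE divx) (is_div_ofE divy).
  have := hord_uX_ev1 P nz_x nz_gx def_x; have := hord_uX_ev1 P nz_y nz_gy def_y.
  by rewrite hord_avoids_u //; lia.
exists ((m%:Z - k%:Z) - (m'%:Z - k'%:Z)) => i.
rewrite (cl_coord_rep repD) defD (is_div_ofE divx) (is_div_ofE divy) /exc_ord.
have := hord_uX_ev1 (exc_div i) nz_x nz_gx def_x.
have := hord_uX_ev1 (exc_div i) nz_y nz_gy def_y.
by rewrite hord_exc_u; nia.
Qed.

Theorem class_group_uvf : Cl_iso_Zs_mod A (fun i => (a i)%:Z).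
Proof.
exists cl_coord; split; first exact: cl_coordD.
split; first exact: cl_coord_onto.
by move=> D wD; split; [apply: cl_coord_span_principal|apply: principal_cl_coord_span].
Qed.

End ClassGroup.

Unset Implicit Arguments.

Theorem corollary4p4
  (K : closedFieldType) (hK : [pchar K] =i pred0)
  (B : idomainType) (phi : {rmorphism K -> B})
  (hfg : fin_gen_alg phi) (hfact : factorial_ring B)
  (f : B) (hf : forall c : K, f <> phi c)
  (s : nat) (p : 'I_s -> B) (a : 'I_s -> nat)
  (hp : forall i, prime_elt (p i))
  (hna : forall i j, i != j -> ~ associated (p i) (p j))
  (ha : forall i, (0 < a i)%N)
  (hfprod : f = \prod_(i < s) p i ^+ a i)
  (A : comNzRingType) (iota : {rmorphism B -> A}) (u v : A)
  (hsurj : forall x : A, exists P, ev2 iota u v P = x)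
  (hker : forall P, ev2 iota u v P = 0 <->
            exists Q, P = Q * (('X : {poly B})%:P * 'X - (f%:P)%:P)) :
  Cl_iso_Zs_mod A (fun i => (a i)%:Z).
Proof.
have nz_f : f != 0 by apply/eqP => f0; apply: (hf 0); rewrite f0 rmorph0.
exact: class_group_uvf hfact nz_f (conj hsurj hker) hp hna ha hfprod.
Qed.
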